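(* Fix real numbers $\beta_0,\beta_3,\beta_4$ and a constant $k$. For $(\beta_1,\beta_2)\in\mathbb{R}^2$ let $T$ be the $3\times3$ matrix $$T=\begin{pmatrix}\beta_1&\beta_2&0\\ \beta_3&\beta_4&0\\ 0&0&\beta_0\end{pmatrix},$$ and let $\mathcal{M}(\beta_1,\beta_2)$ be the sum of the two largest eigenvalues of $T^{T}T$. Then the set $\{(\beta_1,\beta_2)\in\mathbb{R}^2:\mathcal{M}(\beta_1,\beta_2)=k\}$ is a connected subset of the union of a circle and an ellipse, both centered at the origin. It consists of the arcs of the circle lying within the ellipse and the arcs of the ellipse lying within the circle.
   Context: For a Group 2 two-qubit $X$-state, or a Mermin (grid) hyperplane-state sharing its correlation operators, the correlation matrix $\beta$ (with entries the coefficients of the operators $\sigma_i\otimes\sigma_j$, $\sigma_i,\sigma_j\in\{X,Y,Z\}$) can be brought, by permuting rows and columns, to the form $T$ above. Here $\beta_0$ is the coefficient of the distinguished correlation operator and $\beta_1,\dots,\beta_4$ are the remaining four correlation coefficients. The states are not required to be valid (positive semidefinite). The quantity $\mathcal{M}$ is the Horodecki Bell-violation quantity: the sum of the two largest eigenvalues of $\beta^T\beta$. *)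

From HB Require Import structures.
From mathcomp Require Import all_boot all_order all_algebra.
From mathcomp Require Import all_classical all_reals topology normedtype.
Set Implicit Arguments. Unset Strict Implicit. Unset Printing Implicit Defensive.
Import Order.TTheory GRing.Theory Num.Theory numFieldNormedType.Exports.
Local Open Scope ring_scope.
Local Open Scope classical_set_scope.

Definition Tmat (R : realType) (b0 b1 b2 b3 b4 : R) : 'M[R]_3 :=
  \matrix_(i < 3, j < 3)
    nth 0 (nth [::] [:: [:: b1; b2; 0]; [:: b3; b4; 0]; [:: 0; 0; b0]] i) j.

(* [horodeckiM A m] : m is the sum of the two largest eigenvalues of A^T A,
   i.e. char_poly (A^T A) = (X - l1)(X - l2)(X - l3) with l1 >= l2 >= l3
   (eigenvalues counted with multiplicity) and m = l1 + l2. *)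
Definition horodeckiM (R : realType) (A : 'M[R]_3) (m : R) : Prop :=
  exists l1 l2 l3 : R, l3 <= l2 /\ l2 <= l1 /\
    char_poly (A^T *m A) = ('X - l1%:P) * ('X - l2%:P) * ('X - l3%:P) /\
    m = l1 + l2.

Definition circle (R : realType) (r : R) : set (R * R) :=
  [set p | p.1 ^+ 2 + p.2 ^+ 2 = r ^+ 2].
Definition disk (R : realType) (r : R) : set (R * R) :=
  [set p | p.1 ^+ 2 + p.2 ^+ 2 <= r ^+ 2].

Definition is_ellipse_param (R : realType) (a b c : R) : Prop :=
  0 < a /\ b ^+ 2 < a * c.
Definition ellipse (R : realType) (a b c : R) : set (R * R) :=
  [set p | a * p.1 ^+ 2 + 2 * b * p.1 * p.2 + c * p.2 ^+ 2 = 1].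
Definition ellipse_region (R : realType) (a b c : R) : set (R * R) :=
  [set p | a * p.1 ^+ 2 + 2 * b * p.1 * p.2 + c * p.2 ^+ 2 <= 1].

(* The matrix T^T T is block diagonal: its eigenvalues are b0^2 and the two
   eigenvalues of the Gram matrix of the upper 2x2 block, the roots of
   X^2 - t X + d with t = b1^2 + b2^2 + b3^2 + b4^2 and d = (b1 b4 - b2 b3)^2.
   As M is the trace minus the least eigenvalue, M = k says that
   s = b0^2 + t - k is the least eigenvalue.  Either s = b0^2, which puts
   (b1, b2) on a circle, and b0^2 must lie below both Gram eigenvalues, which
   puts (b1, b2) inside an ellipse; or s is a Gram eigenvalue, which puts
   (b1, b2) on that ellipse, and s <= b0^2 puts it inside the circle.
   This set is the level set max(q1, q2) = 1 of two quadratic forms with q1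
   positive definite, and radial projection maps the unit circle continuously
   onto it, so it is connected. *)

From HB Require Import structures.
From mathcomp Require Import all_boot all_order all_algebra.
From mathcomp Require Import all_classical all_reals topology normedtype.
From mathcomp Require Import realfun trigo.
From mathcomp Require Import ring lra.
Import Order.TTheory GRing.Theory Num.Theory numFieldNormedType.Exports.
Local Open Scope ring_scope.
Local Open Scope classical_set_scope.

Definition quad_poly {R : nzRingType} (t d : R) : {poly R} :=
  'X^2 - t%:P * 'X + d%:P.

Lemma quad_polyE {R : comNzRingType} (t d x : R) :
  (quad_poly t d).[x] = x ^+ 2 - t * x + d.
Proof. by rewrite !hornerE. Qed.

Lemma mul_XsubC_quad_poly {R : comNzRingType} (a b : R) :
  ('X - a%:P) * ('X - b%:P) = quad_poly (a + b) (a * b).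
Proof. rewrite /quad_poly polyCD polyCM; ring. Qed.

Lemma cubic_factor_sum_roots {R : realDomainType} {c t d l1 l2 l3 : R} :
  ('X - c%:P) * quad_poly t d = ('X - l1%:P) * ('X - l2%:P) * ('X - l3%:P) ->
  l1 + l2 + l3 = c + t.
Proof.
move=> E; have := congr1 (horner^~ 1) E; have := congr1 (horner^~ (-1)) E.
by have := congr1 (horner^~ 0) E; rewrite !hornerE /=; lra.
Qed.

Lemma least_root_cubic_factor {R : realDomainType} {c l1 l2 l3 : R}
    {f : {poly R}} :
  l3 <= l2 -> l2 <= l1 ->
  ('X - c%:P) * f = ('X - l1%:P) * ('X - l2%:P) * ('X - l3%:P) ->
  (l3 = c /\ 0 <= f.[l3]) \/ (f.[l3] = 0 /\ l3 <= c).
Proof.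
move=> le_32 le_21 E.
have le_3c : l3 <= c.
  have /eqP := congr1 (horner^~ c) E; rewrite !hornerE subrr mul0r eq_sym.
  by rewrite !mulf_eq0 !subr_eq0 => /orP[/orP[]|] /eqP ->; lra.
have /eqP := congr1 (horner^~ l3) E; rewrite !hornerE subrr mulr0 mulf_eq0.
case/orP=> [|/eqP]; last by right.
rewrite subr_eq0 => /eqP l3c; left; split=> //.
have {}E : f = ('X - l1%:P) * ('X - l2%:P).
  by apply: (mulfI (negbT (polyXsubC_eq0 c))); rewrite E l3c; ring.
by rewrite E !hornerE; apply: mulr_le0; lra.
Qed.

(* The point z forces the roots of the quadratic to be real and, when
   0 <= f(s), puts s to the left of its vertex t/2. *)
Lemma sorted_cubic_factor {R : rcfType} {c t d s z : R} :
  s < z -> (quad_poly t d).[z] <= 0 ->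
  (s = c /\ 0 <= (quad_poly t d).[s]) \/ ((quad_poly t d).[s] = 0 /\ s <= c) ->
  exists l1 l2, [/\ s <= l2, l2 <= l1 &
    ('X - c%:P) * quad_poly t d = ('X - l1%:P) * ('X - l2%:P) * ('X - s%:P)].
Proof.
rewrite !quad_polyE => lt_sz fz_le0.
have lt_2s_t : 0 <= s ^+ 2 - t * s + d -> 2 * s < t.
  move=> fs_ge0; have : (z - s) * (s + z - t) <= 0.
    by rewrite (_ : _ * _ = (z ^+ 2 - t * z + d) - (s ^+ 2 - t * s + d)); [lra | ring].
  by rewrite pmulr_rle0 ?subr_gt0 //; lra.
case=> [[sc fs_ge0]|[fs0 le_sc]].
- have disc_ge0 : 0 <= t ^+ 2 - 4 * d.
    rewrite (_ : _ - _ = (2 * z - t) ^+ 2 - 4 * (z ^+ 2 - t * z + d)); last by ring.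
    by rewrite subr_ge0 (le_trans _ (sqr_ge0 _)) // pmulr_rle0.
  set D := Num.sqrt (t ^+ 2 - 4 * d).
  have D_ge0 : 0 <= D by exact: sqrtr_ge0.
  have D2 : D ^+ 2 = t ^+ 2 - 4 * d by rewrite sqr_sqrtr.
  have le_D : D <= t - 2 * s.
    have ts_ge0 : 0 <= t - 2 * s by have := lt_2s_t fs_ge0; lra.
    by rewrite -(ger0_norm ts_ge0) -sqrtr_sqr /D; apply: ler_wsqrtr; nra.
  exists ((t + D) / 2), ((t - D) / 2); split; [lra | lra |].
  have -> : quad_poly t d = ('X - ((t + D) / 2)%:P) * ('X - ((t - D) / 2)%:P).
    rewrite mul_XsubC_quad_poly; congr quad_poly; first by field.
    by rewrite -[d](_ : (t ^+ 2 - D ^+ 2) / 4 = d); [field | rewrite D2; field].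
  by rewrite sc; ring.
- have le_2s_t : 2 * s <= t by apply/ltW/lt_2s_t; rewrite fs0.
  have -> : quad_poly t d = ('X - s%:P) * ('X - (t - s)%:P).
    by rewrite mul_XsubC_quad_poly; congr quad_poly; [ring | nra].
  have [le_c_ts|lt_ts_c] := lerP c (t - s).
  + by exists (t - s), c; split=> //; ring.
  + by exists c, (t - s); split; [lra | lra | ring].
Qed.

Lemma det_mx3 {R : comNzRingType} (A : 'M[R]_3) : \det A =
  A 0 0 * (A 1 1 * A 2 2 - A 1 2 * A 2 1)
  - A 0 1 * (A 1 0 * A 2 2 - A 1 2 * A 2 0)
  + A 0 2 * (A 1 0 * A 2 1 - A 1 1 * A 2 0).
Proof.
rewrite (expand_det_row _ 0) !big_ord_recr big_ord0 /=.
rewrite /cofactor !(expand_det_row _ 0) !big_ord_recr big_ord0 /= /cofactor.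
rewrite !det_mx11 !mxE /= !big_ord0.
(* Through [inord], entries with equal numeric indices become syntactically
   equal, so that [ring] can identify them. *)
pose f (m n : nat) := A (inord m) (inord n).
have Af i j : A i j = f i j by rewrite /f !inord_val.
by rewrite !Af /=; ring.
Qed.

Lemma char_poly_Tmat {R : realType} (b0 b1 b2 b3 b4 : R) :
  char_poly ((Tmat b0 b1 b2 b3 b4)^T *m Tmat b0 b1 b2 b3 b4) =
  ('X - (b0 ^+ 2)%:P) *
    quad_poly (b1 ^+ 2 + b2 ^+ 2 + (b3 ^+ 2 + b4 ^+ 2)) ((b1 * b4 - b2 * b3) ^+ 2).
Proof.
rewrite /char_poly det_mx3 /char_poly_mx /quad_poly !mxE.
rewrite !big_ord_recr !big_ord0 /= !mxE /=.
by rewrite !(polyCD, polyCM, polyCB, polyCN, expr2) !mulr1n !mulr0n; ring.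
Qed.

Lemma horodeckiM_least_root {R : realType} (A : 'M[R]_3) (c t d k s z : R) :
  char_poly (A^T *m A) = ('X - c%:P) * quad_poly t d ->
  k + s = c + t -> s < z -> (quad_poly t d).[z] <= 0 ->
  horodeckiM A k <->
    (s = c /\ 0 <= (quad_poly t d).[s]) \/ ((quad_poly t d).[s] = 0 /\ s <= c).
Proof.
move=> charE trace_ks lt_sz fz_le0; rewrite /horodeckiM charE; split.
- move=> [l1 [l2 [l3 [le_32 [le_21 [E k_l12]]]]]].
  have := cubic_factor_sum_roots E => sum_l.
  have -> : s = l3 by lra.
  exact: least_root_cubic_factor le_32 le_21 E.
- move=> /(sorted_cubic_factor lt_sz fz_le0) [l1 [l2 [le_s2 le_21 E]]].
  exists l1, l2, s; do 3!split=> //.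
  by have := cubic_factor_sum_roots E; lra.
Qed.

Lemma unit_circle_polar {R : realType} (x y : R) :
  x ^+ 2 + y ^+ 2 = 1 -> exists theta : R, (cos theta, sin theta) = (x, y).
Proof.
move=> xy1.
have x_itv : -1 <= x <= 1.
  by rewrite -ler_norml -(expr_le1 (n := 2)) // real_normK ?num_real //; nra.
have sin_acosE : sin (acos x) = `|y|.
  by rewrite sin_acos // -xy1 addrC addKr sqrtr_sqr.
have [y_ge0|y_lt0] := leP 0 y.
- by exists (acos x); rewrite acosK ?in_itv // sin_acosE ger0_norm.
- by exists (- acos x); rewrite cosN sinN acosK ?in_itv // sin_acosE ltr0_norm ?opprK.
Qed.

Lemma cos_sin_neq0 {R : realType} (theta : R) : (cos theta, sin theta) != (0, 0).
Proof.
apply/negP => /eqP[c0 s0]; have := cos2Dsin2 theta.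
by rewrite c0 s0 expr0n addr0 => /esym/eqP; rewrite oner_eq0.
Qed.

Lemma sum_sqr_gt0 {R : realDomainType} {p : R * R} :
  p != (0, 0) -> 0 < p.1 ^+ 2 + p.2 ^+ 2.
Proof.
move=> p_neq0; rewrite lt_neqAle addr_ge0 ?sqr_ge0 // andbT eq_sym.
by rewrite paddr_eq0 ?sqr_ge0 // !sqrf_eq0; case: p p_neq0 => x y; rewrite xpair_eqE.
Qed.

Section GaugeSphere.
Context {R : realType} (g : R * R -> R).
Hypotheses (g_cont : continuous g)
  (g_hom : forall l p, g (l * p.1, l * p.2) = l ^+ 2 * g p)
  (g_gt0 : forall p, p != (0, 0) -> 0 < g p).

Definition radial_proj (p : R * R) : R * R :=
  (p.1 / Num.sqrt (g p), p.2 / Num.sqrt (g p)).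

Lemma radial_projZ l p : 0 < l -> radial_proj (l * p.1, l * p.2) = radial_proj p.
Proof.
move=> l_gt0; rewrite /radial_proj /= g_hom sqrtrM ?sqr_ge0 // sqrtr_sqr gtr0_norm //.
have [->|gp_neq0] := eqVneq (Num.sqrt (g p)) 0; first by rewrite mulr0 !invr0 !mulr0.
by congr (_, _); field; rewrite gp_neq0 gt_eqF.
Qed.

Lemma gauge_radial_proj p : p != (0, 0) -> g (radial_proj p) = 1.
Proof.
move=> p_neq0; have gp_gt0 := g_gt0 _ p_neq0.
rewrite /radial_proj !(mulrC _ (Num.sqrt (g p))^-1) g_hom exprVn sqr_sqrtr ?ltW //.
by rewrite mulVf // gt_eqF.
Qed.

Lemma radial_proj_id p : g p = 1 -> radial_proj p = p.
Proof. by move=> gp1; rewrite /radial_proj gp1 sqrtr1 !divr1; case: p {gp1}. Qed.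

Lemma gauge_sphereE :
  [set p | g p = 1] = (fun theta => radial_proj (cos theta, sin theta)) @` setT.
Proof.
apply/seteqP; split=> [p /= gp1|_ [theta _ <-]]; last first.
  exact/gauge_radial_proj/cos_sin_neq0.
have p_neq0 : p != (0, 0).
  apply: contra_eqN gp1 => /eqP ->.
  have := g_hom 0 (0, 0); rewrite /= mul0r => ->.
  by rewrite expr2 !mul0r eq_sym oner_eq0.
have sq_gt0 := sum_sqr_gt0 p_neq0.
set n := Num.sqrt (p.1 ^+ 2 + p.2 ^+ 2).
have n_gt0 : 0 < n by rewrite sqrtr_gt0.
have [theta cs_eq] : exists theta, (cos theta, sin theta) = (n^-1 * p.1, n^-1 * p.2).
  apply: unit_circle_polar.
  rewrite !exprMn -mulrDr exprVn sqr_sqrtr ?addr_ge0 ?sqr_ge0 //.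
  by rewrite mulVf // gt_eqF.
exists theta => //.
by rewrite cs_eq radial_projZ ?invr_gt0 // radial_proj_id.
Qed.

Lemma connected_gauge_sphere : connected [set p | g p = 1].
Proof.
rewrite gauge_sphereE; apply: connected_continuous_connected.
  exact/connected_intervalP.
apply: continuous_subspaceT => theta.
have cs_cont : {for theta, continuous (fun t => (cos t, sin t))}.
  exact: (cvg_pair (@continuous_cos R theta) (@continuous_sin R theta)).
have g_cs_cont : {for theta, continuous (fun t => g (cos t, sin t))}.
  by apply: continuous_comp; [exact: cs_cont | exact: g_cont].
have inv_cont : {for theta, continuous (fun t => (Num.sqrt (g (cos t, sin t)))^-1)}.
  apply: continuousV; first by rewrite gt_eqF // sqrtr_gt0 g_gt0 ?cos_sin_neq0.
  exact: continuous_comp g_cs_cont (@sqrt_continuous R _).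
exact: (cvg_pair (continuousM (@continuous_cos R theta) inv_cont)
                 (continuousM (@continuous_sin R theta) inv_cont)).
Qed.

End GaugeSphere.

Lemma maxr_eq {R : realDomainType} (x y z : R) :
  Num.max x y = z <-> (x = z /\ y <= z) \/ (y = z /\ x <= z).
Proof.
have [le_xy|lt_yx] := leP x y.
- split=> [<-|[[<- le_yx]|[]//]]; first by right; split.
  by apply/le_anti; rewrite le_xy le_yx.
- split=> [<-|[[]//|[<- le_xy]]]; first by left; split=> //; exact: ltW.
  by move: lt_yx; rewrite ltNge le_xy.
Qed.

Section CircleEllipseArcs.
Context {R : realType}.

Definition qform (a b c : R) (p : R * R) :=
  a * p.1 ^+ 2 + 2 * b * p.1 * p.2 + c * p.2 ^+ 2.

Lemma qformZ a b c l p : qform a b c (l * p.1, l * p.2) = l ^+ 2 * qform a b c p.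
Proof. by rewrite /qform /=; ring. Qed.

Lemma continuous_qform a b c : continuous (qform a b c).
Proof.
move=> p; rewrite /qform.
have fst_cont : {for p, continuous (@fst R R)} by exact: cvg_fst.
have snd_cont : {for p, continuous (@snd R R)} by exact: cvg_snd.
have cst_cont (k : R) : {for p, continuous (fun _ : R * R => k)} by exact: cvg_cst.
have sqr_cont (f : R * R -> R) : {for p, continuous f} ->
    {for p, continuous (fun q => f q ^+ 2)}.
  by move=> f_cont; exact: continuousM.
exact: continuousD (continuousD (continuousM (cst_cont a) (sqr_cont _ fst_cont))
  (continuousM (continuousM (cst_cont (2 * b)) fst_cont) snd_cont))
  (continuousM (cst_cont c) (sqr_cont _ snd_cont)).
Qed.

Definition circle_ellipse_arcs (r a b c : R) : set (R * R) :=
  (circle r `&` ellipse_region a b c) `|` (ellipse a b c `&` disk r).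

Lemma circle_ellipse_arcsE r a b c : 0 < r ->
  circle_ellipse_arcs r a b c =
    [set p | Num.max (qform (r ^- 2) 0 (r ^- 2) p) (qform a b c p) = 1].
Proof.
move=> r_gt0; have r2_gt0 : 0 < r ^+ 2 by rewrite exprn_gt0.
apply/funext => p; rewrite /circle_ellipse_arcs /circle /disk /=.
set q := qform (r ^- 2) 0 (r ^- 2) p.
have -> : p.1 ^+ 2 + p.2 ^+ 2 = r ^+ 2 * q.
  by rewrite /q /qform; field; rewrite gt_eqF.
have circE : r ^+ 2 * q = r ^+ 2 <-> q = 1.
  split=> [r2q|->]; last exact: mulr1.
  by apply: (mulfI (negbT (gt_eqF r2_gt0))); rewrite r2q mulr1.
by rewrite (propext circE) ger_pMr //; apply/propext; rewrite maxr_eq.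
Qed.

Lemma connected_circle_ellipse_arcs r a b c : 0 < r ->
  connected (circle_ellipse_arcs r a b c).
Proof.
move=> r_gt0; rewrite circle_ellipse_arcsE //; apply: connected_gauge_sphere.
- by move=> p; apply: continuous_max; exact: continuous_qform.
- by move=> l p; rewrite !qformZ maxr_pMr // sqr_ge0.
- move=> p p_neq0; rewrite lt_max.
  rewrite (_ : qform _ _ _ p = r ^- 2 * (p.1 ^+ 2 + p.2 ^+ 2)); last by rewrite /qform; ring.
  by rewrite mulr_gt0 ?invr_gt0 ?exprn_gt0 ?sum_sqr_gt0.
Qed.

End CircleEllipseArcs.

Section HorodeckiLevelSet.
Context {R : realType} {b0 b3 b4 k : R}.
Local Notation w := (b3 ^+ 2 + b4 ^+ 2).
Local Notation K := (k - b0 ^+ 2).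
Local Notation den := (K * (K - w)).
Local Notation ea := ((K - b4 ^+ 2) / den).
Local Notation eb := (b3 * b4 / den).
Local Notation ec := ((K - b3 ^+ 2) / den).

Lemma horodecki_K_gt0 : w < K -> 0 < K /\ 0 < K - w.
Proof.
move=> lt_wK; have w_ge0 : 0 <= w by rewrite addr_ge0 ?sqr_ge0.
by split; lra.
Qed.

Lemma horodecki_den_gt0 : w < K -> 0 < den.
Proof. by move=> /horodecki_K_gt0[K_gt0 Kw_gt0]; exact: mulr_gt0. Qed.

Lemma horodecki_ellipse_param : w < K -> is_ellipse_param ea eb ec.
Proof.
move=> lt_wK; have [K_gt0 Kw_gt0] := horodecki_K_gt0 lt_wK.
have le_b4w : b4 ^+ 2 <= w by rewrite lerDr sqr_ge0.
split; first by rewrite divr_gt0 ?horodecki_den_gt0 //; lra.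
rewrite -subr_gt0 (_ : _ - _ = den^-1) ?invr_gt0 ?horodecki_den_gt0 //.
by field; rewrite !gt_eqF.
Qed.

Lemma den_horodecki_qform x y : w < K ->
  den * qform ea eb ec (x, y) = K * (x ^+ 2 + y ^+ 2) - (x * b4 - y * b3) ^+ 2.
Proof.
move=> /horodecki_K_gt0[K_gt0 Kw_gt0].
by rewrite /qform /=; field; rewrite !gt_eqF.
Qed.

Lemma horodecki_level_setE : w < K ->
  [set p : R * R | horodeckiM (Tmat b0 p.1 p.2 b3 b4) k] =
    circle_ellipse_arcs (Num.sqrt (k - w)) ea eb ec.
Proof.
move=> lt_wK; have b0_ge0 : 0 <= b0 ^+ 2 by rewrite sqr_ge0.
apply/funext => -[x y] /=; apply/propext.
set u := x ^+ 2 + y ^+ 2; set d := (x * b4 - y * b3) ^+ 2.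
rewrite (horodeckiM_least_root _ (b0 ^+ 2) (u + w) d _ (u + w - K) u); last 4 first.
- exact: char_poly_Tmat.
- by ring.
- by lra.
- rewrite quad_polyE (_ : _ + d = - (x * b3 + y * b4) ^+ 2) ?oppr_le0 ?sqr_ge0 //.
  by rewrite /u /d; ring.
have := den_horodecki_qform x y lt_wK; rewrite -/u -/d; set Q := qform _ _ _ _ => denQ.
have -> : (quad_poly (u + w) d).[u + w - K] = den * (1 - Q).
  by rewrite mulrBr mulr1 denQ quad_polyE; ring.
have circE : u + w - K = b0 ^+ 2 <-> u = k - w by split=> ?; lra.
have ellE : den * (1 - Q) = 0 <-> Q = 1.
  split=> [/eqP|->]; last by rewrite subrr mulr0.
  by rewrite mulf_eq0 gt_eqF ?horodecki_den_gt0 // subr_eq0 eq_sym => /eqP.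
have leE : (u + w - K <= b0 ^+ 2) = (u <= k - w) by apply/idP/idP => ?; lra.
rewrite (propext circE) (propext ellE) leE pmulr_rge0 ?horodecki_den_gt0 // subr_ge0.
rewrite /circle_ellipse_arcs /circle /disk /ellipse /ellipse_region /= -/u.
by rewrite sqr_sqrtr //; lra.
Qed.

Lemma horodecki_level_set : w < K ->
  exists r a b c, [/\ 0 < r, is_ellipse_param a b c &
    [set p : R * R | horodeckiM (Tmat b0 p.1 p.2 b3 b4) k] =
      circle_ellipse_arcs r a b c].
Proof.
move=> lt_wK; exists (Num.sqrt (k - w)), ea, eb, ec; split.
- by rewrite sqrtr_gt0; have := sqr_ge0 b0; lra.
- exact: horodecki_ellipse_param.
- exact: horodecki_level_setE.
Qed.

End HorodeckiLevelSet.

Theorem proposition5 (R : realType) (b0 b3 b4 k : R)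
  (Hnondeg : b3 ^+ 2 + b4 ^+ 2 < k - b0 ^+ 2) :
  let L := [set p : R * R | horodeckiM (Tmat b0 p.1 p.2 b3 b4) k] in
  exists r a b c : R,
    0 < r /\ is_ellipse_param a b c /\
    L `<=` circle r `|` ellipse a b c /\
    L = (circle r `&` ellipse_region a b c) `|` (ellipse a b c `&` disk r) /\
    connected L.
Proof.
move=> L; have [r [a [b [c [r_gt0 ellipse_abc LE]]]]] := horodecki_level_set Hnondeg.
exists r, a, b, c; rewrite /L LE; do 2!split=> //.
split; first by move=> p [[circ_p _]|[ell_p _]]; [left | right].
by split=> //; exact: connected_circle_ellipse_arcs.
Qed.
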